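(* Let $f\colon\mathbb{Z}_{\ge1}\times\mathbb{Z}_{\ge1}\to\mathbb{Z}$ be any function such that for all $k,h\ge1$ every finite digraph $G$ with $\delta^+(G)\geq f(k,h)$ contains $S^-_{k,h}$ as a subgraph. Let $k\geq 1$ and $\ell\geq 2$. Then every finite digraph $G$ with $\delta^+(G)\geq f(k,3k\ell^{k+1})+2k\ell^k$ contains $T(k,\ell)$ as a subgraph.
   Context: Digraphs are finite, have no loops and no multiple copies of the same edge, but may contain two edges in opposite directions between a pair of vertices. $\delta^+(G)$ is the minimum out-degree. $S^-_{k,h}$ is the $(k-1)$-subdivision of the in-star with $h$ leaves: a centre vertex together with $h$ directed paths of length $k$ ending at the centre, pairwise sharing only the centre. (A function $f$ as in the hypothesis exists by a result of Aboulker, Cohen, Havet, Lochet, Moura and Thomassé.) $B^+_{k,\ell}$ is the complete $\ell$-ary tree of depth $k$ with all edges oriented away from the root. $T(k,\ell)$ is the oriented tree obtained from $B^+_{k,\ell}$ by identifying each leaf with the centre of a new (disjoint) copy of $S^-_{k,\ell}$. Containing a digraph as a subgraph means having a subgraph isomorphic to it. *)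

From mathcomp Require Import all_boot all_order all_algebra.
Set Implicit Arguments. Unset Strict Implicit. Unset Printing Implicit Defensive.

(* Being a relation, there
   are no multiple copies of an edge; both x->y and y->x may be present. *)
Definition digraph (V : finType) (E : rel V) : Prop :=
  (forall x, ~~ E x x) /\ 0 < #|V|.

Definition outdeg (V : finType) (E : rel V) (x : V) : nat := #|[set y | E x y]|.

Definition mindeg_ge (V : finType) (E : rel V) (d : int) : Prop :=
  forall x, (d <= (outdeg E x)%:Z)%R.

Definition contains (V : finType) (E : rel V) (W : finType) (F : rel W) : Prop :=
  exists phi : W -> V, injective phi /\ forall x y, F x y -> E (phi x) (phi y).

(* S^-_{k,h}: vertex None is the centre; Some (i, j) is the vertex of the
   i-th path at distance j+1 from the centre (j < k). *)
Definition Sm_vert (k h : nat) := option ('I_h * 'I_k)%type.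

Definition Sm_edge (k h : nat) : rel (Sm_vert k h) :=
  fun u v =>
    match u, v with
    | Some (i, j), Some (i', j') => (i == i') && (val j == (val j').+1)
    | Some (_, j), None => val j == 0
    | _, _ => false
    end.

(* Vertices of B^+_{k,l}: words over 'I_l of length at most k
   (the root is the empty word); the edges go from a word s to s ++ [:: a]. *)
Definition B_vert (k l : nat) := {n : 'I_k.+1 & n.-tuple 'I_l}.

Definition B_word (k l : nat) (u : B_vert k l) : seq 'I_l := val (tagged u).

Definition B_edge (k l : nat) : rel (B_vert k l) :=
  fun u v => (size (B_word v) == (size (B_word u)).+1) &&
             (B_word u == take (size (B_word u)) (B_word v)).

(* T(k,l): the tree B^+_{k,l} (inl vertices) together with, for each leaf
   t (a word of length k), a copy of S^-_{k,l} whose non-centre vertices are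
   inr (t, (i, j)) and whose centre is identified with the leaf t. *)
Definition T_vert (k l : nat) :=
  (B_vert k l + (k.-tuple 'I_l * ('I_l * 'I_k)))%type.

Definition T_edge (k l : nat) : rel (T_vert k l) :=
  fun u v =>
    match u, v with
    | inl a, inl b => B_edge a b
    | inr (t, (i, j)), inr (t', (i', j')) =>
        (t == t') && (i == i') && (val j == (val j').+1)
    | inr (t, (_, j)), inl b => (val j == 0) && (B_word b == val t)
    | inl _, inr _ => false
    end.

From mathcomp Require Import all_boot all_order all_algebra zify.
Set Implicit Arguments. Unset Strict Implicit. Unset Printing Implicit Defensive.

(* Put h = 3kl^(k+1) and d = 2l^k > |B^+_{k,l}|.  Level 0 is the set of centres
   of copies of S^-_{k,h} and level i+1 the set of vertices with at least d
   out-neighbours in level i.  If level k were empty, a vertex in none of the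
   levels 0..k-1 would have fewer than d out-neighbours in each of them, so such
   vertices would span a digraph of minimum out-degree f(k,h) without a centre;
   thus every vertex lies in a level below k, and since every vertex has more
   than k(d-1) out-neighbours, induction on s puts every vertex in one of the
   levels s..k-1, which is absurd for s = k.  From a vertex of level k, B^+_{k,l}
   is embedded greedily with its depth-j nodes in level k-j, so that its leaves
   are centres; each in-path at a leaf is then one of the h disjoint in-paths of
   that centre's star missing everything chosen so far, which exists because h
   exceeds the size of T(k,l). *)

Lemma card_bigcup_le (T I : finType) (P : pred I) (A : I -> {set T}) :
  #|\bigcup_(i | P i) A i| <= \sum_(i | P i) #|A i|.
Proof.
elim/big_rec2: _ => [|i U n _ IH]; first by rewrite cards0.
by apply: leq_trans (leq_card_setU _ _) _; rewrite leq_add2l.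
Qed.

Lemma card_le_cover (T I : finType) (P : pred I) (A : I -> {set T}) (N : {set T}) c :
  N \subset \bigcup_(i | P i) A i -> (forall i, P i -> #|N :&: A i| <= c) ->
  #|N| <= #|I| * c.
Proof.
move=> /subsetP cover small.
have cover' : N \subset \bigcup_(i | P i) (N :&: A i).
  apply/subsetP => y yN; have /bigcupP [i Pi yA] := cover y yN.
  by apply/bigcupP; exists i; rewrite ?inE ?yN.
apply: leq_trans (subset_leq_card cover') _.
apply: leq_trans (card_bigcup_le _ _) _.
rewrite -sum1_card big_distrl big_mkcond [leqRHS]big_mkcond /=.
by apply: leq_sum => i _; case: ifP => [/small|]; rewrite ?mul1n.
Qed.

Lemma pairwise_disjoint_avoid (X T : finType) (F : X -> {set T}) (cs : {set X}) (U : {set T}) :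
  {in cs &, forall x y, x != y -> [disjoint F x & F y]} ->
  #|U| < #|cs| -> exists2 x, x \in cs & [disjoint F x & U].
Proof.
move=> disF ltUcs; apply/exists_inP; apply: contraLR ltUcs => /exists_inPn meet.
rewrite -leqNgt -(card_imset U (@Some_inj _)).
pose g x := [pick v in F x :&: U].
have gP x : x \in cs -> exists2 v, g x = Some v & v \in F x :&: U.
  move=> xcs; rewrite /g; case: pickP => [v vFU|none]; first by exists v.
  by case/negP: (meet x xcs); rewrite -setI_eq0; apply/eqP/setP => v; rewrite none inE.
rewrite -(card_in_imset (f := g)).
  apply/subset_leq_card/subsetP => _ /imsetP [x xcs ->].
  by have [v -> /setIP [_ vU]] := gP x xcs; apply: imset_f.
move=> x y xcs ycs gxy; apply/eqP/negPn/negP => xy.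
have [v gxv /setIP [vFx _]] := gP x xcs; have [w gyw /setIP [wFy _]] := gP y ycs.
move: gxv; rewrite gxy gyw => -[wv]; rewrite wv in wFy.
by rewrite (disjointFr (disF x y xcs ycs xy) vFx) in wFy.
Qed.

Section GreedyChoice.

Variables (W T X : finType) (x0 : X) (rank weight : W -> nat).
Variables (img : W -> X -> {set T}) (admissible : W -> (W -> X) -> X -> bool).

Hypothesis admissible_lower : forall w a a' x,
  (forall w', rank w' < rank w -> a w' = a' w') -> admissible w a x = admissible w a' x.
Hypothesis card_img : forall w a x, admissible w a x -> #|img w x| <= weight w.
Hypothesis enough_candidates : forall w a,
  (forall w', rank w' < rank w -> admissible w' a (a w')) ->
  exists cs : {set X},
    [/\ \sum_(w' | (w' != w) && (rank w' <= rank w)) weight w' < #|cs|,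
        {in cs, forall x, admissible w a x} &
        {in cs &, forall x y, x != y -> [disjoint img w x & img w y]}].

Let good (S : {set W}) (a : W -> X) :=
  {in S, forall w, admissible w a (a w)} /\
  {in S &, forall w w', w != w' -> [disjoint img w (a w) & img w' (a w')]}.

Let rank_closed (S : {set W}) := forall w w', w \in S -> rank w' < rank w -> w' \in S.

Lemma greedy_extend S w a :
  rank_closed S -> w \in S -> {in S, forall v, rank v <= rank w} ->
  good (S :\ w) a -> exists a', good S a'.
Proof.
move=> closedS wS wmax [adm_a dis_a].
have below_w v : rank v < rank w -> v \in S :\ w.
  by move=> lt; rewrite !inE (closedS w) // andbT; apply: contraTneq lt => ->; rewrite ltnn.
have [cs [ltcs adm_cs dis_cs]] := enough_candidates (fun v lt => adm_a v (below_w v lt)).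
pose U := \bigcup_(v in S :\ w) img v (a v).
have ltUcs : #|U| < #|cs|.
  apply: leq_ltn_trans (card_bigcup_le _ _) (leq_ltn_trans _ ltcs).
  rewrite big_mkcond [leqRHS]big_mkcond /=; apply: leq_sum => v _.
  case: ifPn => [vSw|_]; last exact: leq0n.
  have /setD1P [vw vS] := vSw.
  by rewrite vw wmax //=; apply: card_img (adm_a v vSw).
have [x xcs xU] := pairwise_disjoint_avoid dis_cs ltUcs.
pose a' v := if v == w then x else a v.
have a'E v : v != w -> a' v = a v by rewrite /a' => /negbTE ->.
have adm_a' v : v \in S -> admissible v a' =1 admissible v a.
  move=> vS y; apply: admissible_lower => v' lt; apply: a'E.
  by apply: contraTneq lt => ->; rewrite -leqNgt wmax.
have dis_w v : v \in S :\ w -> [disjoint img w (a' w) & img v (a' v)].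
  move=> vSw; have /setD1P [vw _] := vSw; rewrite /a' eqxx (negbTE vw).
  by apply: disjointWr xU; apply: bigcup_sup.
exists a'; split=> [v vS | v v' vS v'S vv']; rewrite ?adm_a' //.
  case: (eqVneq v w) => [->|vw]; first by rewrite /a' eqxx; apply: adm_cs.
  by rewrite a'E //; apply: adm_a; apply/setD1P.
case: (eqVneq v w) => [vw|vw]; first by subst v; apply: dis_w; apply/setD1P; rewrite eq_sym.
case: (eqVneq v' w) => [v'w|v'w].
  by subst v'; rewrite disjoint_sym; apply: dis_w; apply/setD1P.
by rewrite !a'E //; apply: dis_a => //; apply/setD1P.
Qed.

Lemma greedy_choice : exists a : W -> X,
  (forall w, admissible w a (a w)) /\
  (forall w w', w != w' -> [disjoint img w (a w) & img w' (a w')]).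
Proof.
suff /(_ [set: W]) [|a [adm dis]] : forall S, rank_closed S -> exists a, good S a.
- by move=> w w' _ _; rewrite inE.
- by exists a; split=> [w|w w']; [apply: adm | apply: dis]; rewrite inE.
move=> S; have [n] := ubnP #|S|; elim: n S => // n IH S ltSn closedS.
case: (set_0Vmem S) => [->|[w0 w0S]]; first by exists (fun=> x0); split=> w; rewrite inE.
have [w wS wmax] := @arg_maxnP _ w0 (mem S) rank w0S; have {}wS : w \in S := wS.
have {}wmax : {in S, forall v, rank v <= rank w} := wmax.
have [||a good_a] := IH (S :\ w).
- by rewrite (cardsD1 w S) wS in ltSn.
- move=> v v' /setD1P [vw vS] lt; apply/setD1P; split; last exact: closedS vS lt.
  by apply: contraTneq lt => ->; rewrite -leqNgt wmax.
exact: greedy_extend closedS wS wmax good_a.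
Qed.

End GreedyChoice.

Definition depth k l (b : B_vert k l) : nat := size (B_word b).

Definition leaf k l (t : k.-tuple 'I_l) : B_vert k l :=
  existT (fun n : 'I_k.+1 => n.-tuple 'I_l) ord_max t.

Lemma depth_leaf k l (t : k.-tuple 'I_l) : depth (leaf t) = k.
Proof. exact: size_tuple. Qed.

Lemma depth_le k l (b : B_vert k l) : depth b <= k.
Proof. by rewrite /depth size_tuple -ltnS. Qed.

Lemma B_word_inj k l : injective (@B_word k l).
Proof.
case=> n t [m s]; rewrite /B_word /= => ts.
have nm : n = m by apply: val_inj; rewrite /= -(size_tuple t) -(size_tuple s) ts.
by subst m; congr Tagged; apply: val_inj.
Qed.

Lemma B_depth0_uniq k l (b b' : B_vert k l) : depth b = 0 -> depth b' = 0 -> b = b'.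
Proof. by move=> /size0nil b0 /size0nil b'0; apply: B_word_inj; rewrite b0 b'0. Qed.

Lemma B_edge_depth k l (u v : B_vert k l) : B_edge u v -> depth v = (depth u).+1.
Proof. by case/andP => /eqP. Qed.

Lemma B_parent_uniq k l (u u' v : B_vert k l) : B_edge u v -> B_edge u' v -> u = u'.
Proof.
move=> uv u'v; have := B_edge_depth uv; rewrite (B_edge_depth u'v) => -[uu'].
case/andP: uv => _ /eqP uv; case/andP: u'v => _ /eqP u'v.
by apply: B_word_inj; rewrite uv u'v; congr take; apply/esym.
Qed.

Lemma B_parent_exists k l (v : B_vert k l) : 0 < depth v -> exists u, B_edge u v.
Proof.
case: v => n t; rewrite /depth /B_word /= size_tuple => n_gt0.
have ltn : n.-1 < k.+1 by apply: leq_ltn_trans (leq_pred n) (ltn_ord n).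
have szt : size (take n.-1 t) == n.-1 by rewrite size_takel // size_tuple leq_pred.
exists (existT (fun m : 'I_k.+1 => m.-tuple 'I_l) (Ordinal ltn) (Tuple szt)).
by rewrite /B_edge /B_word /= (eqP szt) size_tuple prednK // !eqxx.
Qed.

Lemma card_B_vert_lt k l : 2 <= l -> #|{: B_vert k l}| < 2 * l ^ k.
Proof.
move=> l_ge2; rewrite card_tagged sumnE big_map big_enum /=.
under eq_bigr => n _ do rewrite card_tuple card_ord.
elim: k => [|k IH]; first by rewrite big_ord_recr big_ord0.
rewrite big_ord_recr /= expnS.
have : 2 * l ^ k <= l * l ^ k by rewrite leq_mul2r l_ge2 orbT.
move: IH; set s := \sum_(_ < _) _; lia.
Qed.

Definition induced (V : finType) (E : rel V) (U : {set V}) : rel {x | x \in U} :=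
  fun x y => E (val x) (val y).
Arguments induced {V} E U.

Lemma outdeg_induced (V : finType) (E : rel V) (U : {set V}) (u : {x | x \in U}) :
  outdeg (induced E U) u = #|[set y | E (val u) y] :&: U|.
Proof.
rewrite /outdeg -(card_imset _ val_inj); apply: eq_card => y; rewrite !inE.
apply/imsetP/andP => [[z]|[Euy yU]]; first by rewrite inE => Euz ->; split=> //; apply: valP.
by exists (Sub y yU); rewrite ?inE.
Qed.

Lemma threshold_gt0 k h (c : int) : 0 < k -> 0 < h ->
  (forall (V : finType) (E : rel V),
     digraph E -> mindeg_ge E c -> contains E (@Sm_edge k h)) ->
  (0 < c)%R.
Proof.
move=> k_gt0 h_gt0 forcing; case: (Num.Theory.ltrP 0 c) => // c_le0.
have [] := forcing unit (fun _ _ => false); first by rewrite /digraph card_unit.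
  by move=> x; apply: Order.POrderTheory.le_trans c_le0 _.
move=> phi [phi_inj _].
have := @phi_inj None (Some (Ordinal h_gt0, Ordinal k_gt0)).
by case: (phi _); case: (phi _) => /(_ erefl).
Qed.

Section Levels.

Variables (k h d : nat) (V : finType) (E : rel V).

Definition star_copies : {set {ffun Sm_vert k h -> V}} :=
  [set g : {ffun Sm_vert k h -> V} |
    injectiveb g && [forall x, forall y, Sm_edge x y ==> E (g x) (g y)]].

Definition centres : {set V} := [set g None | g : {ffun Sm_vert k h -> V} in star_copies].

Definition star_at (c : V) : {ffun Sm_vert k h -> V} :=
  odflt [ffun=> c] [pick g in star_copies | g None == c].

Lemma star_copiesP (g : {ffun Sm_vert k h -> V}) :
  reflect (injective g /\ forall x y, Sm_edge x y -> E (g x) (g y)) (g \in star_copies).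
Proof.
rewrite inE; apply: (iffP andP) => [[/injectiveP g_inj /forallP g_edge]|[g_inj g_edge]].
  by split=> // x y; move/forallP: (g_edge x) => /(_ y) /implyP.
split; first exact/injectiveP.
by apply/forallP => x; apply/forallP => y; apply/implyP/g_edge.
Qed.

Lemma centres_star (phi : Sm_vert k h -> V) :
  injective phi -> (forall x y, Sm_edge x y -> E (phi x) (phi y)) -> phi None \in centres.
Proof.
move=> phi_inj phi_edge; rewrite -[phi None](ffunE phi); apply: imset_f.
by apply/star_copiesP; split=> [x y|x y]; rewrite !ffunE; [apply: phi_inj | apply: phi_edge].
Qed.

Lemma star_atP c : c \in centres ->
  [/\ injective (star_at c), forall x y, Sm_edge x y -> E (star_at c x) (star_at c y)
    & star_at c None = c].
Proof.
case/imsetP => g0 g0S ->; rewrite /star_at.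
case: pickP => [g /andP [/star_copiesP [] ? ? /eqP]|] //.
by move/(_ g0); rewrite g0S eqxx.
Qed.

Fixpoint level (i : nat) : {set V} :=
  if i is i'.+1 then [set v | d <= #|[set y | E v y] :&: level i'|] else centres.

Lemma card_out_levels_le (P : pred 'I_k) u :
  (forall i : 'I_k, P i -> u \notin level i.+1) ->
  #|[set y | E u y] :&: \bigcup_(i | P i) level i| <= k * d.-1.
Proof.
move=> notin; rewrite -[k in k * _]card_ord; apply: card_le_cover (subsetIr _ _) _ => i Pi.
have := notin i Pi; rewrite inE -ltnNge => lt.
rewrite -ltnS prednK; last exact: leq_ltn_trans (leq0n _) lt.
by apply: leq_ltn_trans lt; rewrite subset_leq_card // setSI // subsetIl.
Qed.

Lemma notin_level_succ v (i : 'I_k) : v \notin level k ->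
  (forall j : 'I_k, i < j -> v \notin level j) -> v \notin level i.+1.
Proof.
move=> v_top v_above; have [lt|ge] := ltnP i.+1 k; first exact: (v_above (Ordinal lt)).
by have -> : i.+1 = k by apply/eqP; rewrite eqn_leq ge ltn_ord.
Qed.

Variable m : nat.
Hypothesis k_gt0 : 0 < k.
Hypothesis d_gt0 : 0 < d.
Hypothesis E_digraph : digraph E.
Hypothesis outdeg_ge : forall x, m + k * d <= outdeg E x.
Hypothesis forcing : forall (W : finType) (F : rel W),
  digraph F -> mindeg_ge F m%:Z -> contains F (@Sm_edge k h).

Lemma outdeg_outside_levels u :
  u \notin \bigcup_(i : 'I_k) level i -> u \notin level k ->
  m <= #|[set y | E u y] :&: ~: \bigcup_(i : 'I_k) level i|.
Proof.
move=> /bigcupP u_low u_top.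
have u_out (i : 'I_k) : u \notin level i by apply/negP => ui; apply: u_low; exists i.
set U := ~: \bigcup_(i : 'I_k) level i.
have : #|[set y | E u y] :\: U| <= k * d.-1.
  rewrite setDE setCK.
  exact: card_out_levels_le (fun i _ => notin_level_succ u_top (fun j _ => u_out j)).
have := outdeg_ge u; rewrite /outdeg -(cardsID U).
have : k * d.-1 <= k * d by rewrite leq_mul2l leq_pred orbT.
lia.
Qed.

Lemma level_top_nonempty : exists v, v \in level k.
Proof.
have [v|top0] := pickP (mem (level k)); first by exists v.
have {}top0 v : v \notin level k by apply/negbT/top0.
have below_top v : [exists i : 'I_k, v \in level i].
  apply: contraT => /existsPn v_out.
  pose U := ~: \bigcup_(i : 'I_k) level i.
  have vU : v \in U by rewrite in_setC; apply/bigcupP => -[i _]; apply/negP/v_out.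
  have [] := forcing (F := induced E U).
  - by split=> [x|]; [apply: E_digraph.1 | apply/card_gt0P; exists (Sub v vU)].
  - move=> u; rewrite lez_nat outdeg_induced.
    by apply: outdeg_outside_levels; [rewrite -in_setC; apply: valP | apply: top0].
  move=> g [g_inj g_edge].
  have := centres_star (phi := fun x => val (g x)) (fun x y e => g_inj x y (val_inj e)) g_edge.
  have := valP (g None); rewrite in_setC => /bigcupP g_low g_centre; exfalso.
  by apply: g_low; exists (Ordinal k_gt0).
have climb s v : [exists i : 'I_k, (s <= i) && (v \in level i)].
  elim: s v => [|s IH] v; first by have /existsP [i vi] := below_top v; apply/existsP; exists i.
  apply: contraT => /existsPn stuck.
  have v_out (i : 'I_k) : s <= i -> v \notin level i.+1.
    move=> si; apply: notin_level_succ (top0 v) _ => j ij; apply: contraNN (stuck j) => vj.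
    by rewrite vj (leq_trans _ ij).
  have := card_out_levels_le v_out.
  have /setIidPl -> : [set y | E v y] \subset \bigcup_(i : 'I_k | s <= i) level i.
    apply/subsetP => y _; have /existsP [i /andP [si yi]] := IH y.
    by apply/bigcupP; exists i.
  have := outdeg_ge v; rewrite /outdeg.
  have : k * d.-1 < k * d by rewrite ltn_mul2l k_gt0 ltn_predL.
  lia.
have [v0 _] := card_gt0P E_digraph.2.
by have /existsP [i /andP []] := climb k v0; rewrite leqNgt ltn_ord.
Qed.

End Levels.

Section TreeEmbedding.

Variables (k l h d : nat) (V : finType) (E : rel V) (r : V).
Hypothesis r_top : r \in level k h d E k.
Hypothesis card_B_lt_d : #|{: B_vert k l}| < d.
Hypothesis size_T_lt_h : #|{: B_vert k l}| + k * (l ^ k * l) < h.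

(* Items to place are the nodes of B^+_{k,l} and the pairs (t, i) standing for
   the i-th in-path at leaf t.  A choice is a vertex with an in-path index of
   S^-_{k,h}: a node uses only the vertex (the index is the dummy [p0]), a
   branch only the index, its vertex being forced to be the image of its leaf. *)
Let item := (B_vert k l + k.-tuple 'I_l * 'I_l)%type.
Let choice := (V * 'I_h)%type.

Let p0 : 'I_h := Ordinal (leq_ltn_trans (leq0n _) size_T_lt_h).

Let rank (w : item) : nat := if w is inl b then depth b else k.+1.
Let weight (w : item) : nat := if w is inl _ then 1 else k.

Let img (w : item) (x : choice) : {set V} :=
  if w is inl _ then [set x.1] else [set star_at k h E x.1 (Some (x.2, j)) | j : 'I_k].

Let admissible (w : item) (a : item -> choice) (x : choice) : bool :=
  match w with
  | inl b => (x.1 \in level k h d E (k - depth b)) &&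
             [forall b', B_edge b' b ==> E (a (inl b')).1 x.1]
  | inr (t, _) => x.1 == (a (inl (leaf t))).1
  end.

Lemma admissible_lower w a a' x :
  (forall w', rank w' < rank w -> a w' = a' w') -> admissible w a x = admissible w a' x.
Proof.
case: w => [b|[t i]] /= agree; last by rewrite agree // /rank depth_leaf.
congr andb; apply: eq_forallb => b'; case: (boolP (B_edge b' b)) => //= b'b.
by rewrite agree // /rank (B_edge_depth b'b).
Qed.

Lemma card_img w a x : admissible w a x -> #|img w x| <= weight w.
Proof.
case: w => [b|p] _ /=; first by rewrite cards1.
by apply: leq_trans (leq_imset_card _ _) _; rewrite card_ord.
Qed.

Lemma node_choices (b : B_vert k l) (Z : {set V}) :
  let cs := [set (z, p0) | z in Z] in
  #|cs| = #|Z| /\ {in cs &, forall x y, x != y -> [disjoint img (inl b) x & img (inl b) y]}.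
Proof.
split; first by rewrite card_imset // => z z' [].
move=> _ _ /imsetP [z _ ->] /imsetP [z' _ ->] zz' /=.
by rewrite disjoints1 inE; apply: contraNneq zz' => ->.
Qed.

Lemma weight_below_node (b : B_vert k l) :
  \sum_(w | (w != inl b) && (rank w <= rank (inl b))) weight w <= #|{: B_vert k l}|.
Proof.
rewrite big_sumType /= [X in _ + X <= _]big_pred0 => [|p]; last by rewrite ltnNge depth_le.
by rewrite addn0 -sum1_card big_mkcond leq_sum // => b' _; case: ifP.
Qed.

Lemma weight_total : \sum_(w : item) weight w = #|{: B_vert k l}| + k * (l ^ k * l).
Proof.
by rewrite big_sumType /= sum1_card sum_nat_const card_prod card_tuple !card_ord mulnC.
Qed.

Lemma node_candidates (b : B_vert k l) a :
  (forall w', rank w' < rank (inl b) -> admissible w' a (a w')) ->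
  exists cs : {set choice},
    [/\ \sum_(w | (w != inl b) && (rank w <= rank (inl b))) weight w < #|cs|,
        {in cs, forall x, admissible (inl b) a x} &
        {in cs &, forall x y, x != y -> [disjoint img (inl b) x & img (inl b) y]}].
Proof.
move=> adm_below; have [depth0|depth_gt0] := posnP (depth b).
  have [card_cs dis_cs] := node_choices b (level k h d E k).
  exists [set (z, p0) | z in level k h d E k]; split=> //.
  - rewrite card_cs big_pred0 => [|[b'|p] /=]; first by apply/card_gt0P; exists r.
      apply/negbTE; rewrite negb_and negbK depth0 leqn0.
      by have [/(B_depth0_uniq depth0) ->|] := eqVneq (depth b') 0; rewrite ?eqxx ?orbT.
    by rewrite depth0.
  - move=> _ /imsetP [z ztop ->] /=; rewrite depth0 subn0 ztop /=.
    by apply/forallP => b'; apply/implyP => /B_edge_depth; rewrite depth0.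
have [b' b'b] := B_parent_exists depth_gt0.
have /andP [+ _] : admissible (inl b') a (a (inl b')).
  by apply: adm_below; rewrite /rank (B_edge_depth b'b).
have -> : k - depth b' = (k - depth b).+1 by have := depth_le b; rewrite (B_edge_depth b'b); lia.
set y := (a (inl b')).1; rewrite inE => many_out.
have [card_cs dis_cs] := node_choices b ([set z | E y z] :&: level k h d E (k - depth b)).
exists [set (z, p0) | z in [set z | E y z] :&: level k h d E (k - depth b)]; split=> //.
  by rewrite card_cs; apply: leq_ltn_trans (weight_below_node b) (leq_trans card_B_lt_d many_out).
move=> _ /imsetP [z /setIP [Eyz zlev] ->] /=; rewrite zlev /=.
apply/forallP => b''; apply/implyP => b''b.
by rewrite (B_parent_uniq b''b b'b); rewrite inE in Eyz.
Qed.

Lemma leaf_centre a t :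
  admissible (inl (leaf t)) a (a (inl (leaf t))) -> (a (inl (leaf t))).1 \in centres k h E.
Proof. by rewrite /= depth_leaf subnn => /andP []. Qed.

Lemma branch_candidates (t : k.-tuple 'I_l) (i : 'I_l) a :
  (forall w', rank w' < rank (inr (t, i)) -> admissible w' a (a w')) ->
  exists cs : {set choice},
    [/\ \sum_(w | (w != inr (t, i)) && (rank w <= rank (inr (t, i)))) weight w < #|cs|,
        {in cs, forall x, admissible (inr (t, i)) a x} &
        {in cs &, forall x y, x != y -> [disjoint img (inr (t, i)) x & img (inr (t, i)) y]}].
Proof.
move=> adm_below; have := leaf_centre (adm_below (inl (leaf t)) _).
rewrite /rank depth_leaf => /(_ (ltnSn k)); set c := (a _).1 => /star_atP [c_inj _ _].
exists [set (c, p) | p : 'I_h]; split.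
- rewrite card_imset => [|p p' [] //]; rewrite card_ord; apply: leq_ltn_trans size_T_lt_h.
  rewrite -weight_total [leqRHS](bigID (fun w => (w != inr (t, i)) && (rank w <= k.+1))).
  exact: leq_addr.
- by move=> _ /imsetP [p _ ->] /=.
move=> _ _ /imsetP [p _ ->] /imsetP [p' _ ->] pp' /=.
rewrite -setI_eq0; apply/eqP/setP => z; rewrite !inE; apply/negbTE/andP.
by case=> /imsetP [j _ ->] /imsetP [j' _ /c_inj [pp'_eq _]]; rewrite pp'_eq eqxx in pp'.
Qed.

Lemma item_candidates w a :
  (forall w', rank w' < rank w -> admissible w' a (a w')) ->
  exists cs : {set choice},
    [/\ \sum_(w' | (w' != w) && (rank w' <= rank w)) weight w' < #|cs|,
        {in cs, forall x, admissible w a x} &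
        {in cs &, forall x y, x != y -> [disjoint img w x & img w y]}].
Proof. by case: w => [b|[t i]]; [apply: node_candidates | apply: branch_candidates]. Qed.

Lemma contains_T_of_choice (a : item -> choice) :
  (forall w, admissible w a (a w)) ->
  (forall w w', w != w' -> [disjoint img w (a w) & img w' (a w')]) ->
  contains E (@T_edge k l).
Proof.
move=> adm dis.
have centre t : (a (inl (leaf t))).1 \in centres k h E := leaf_centre (adm _).
have at_leaf t i : (a (inr (t, i))).1 = (a (inl (leaf t))).1 := eqP (adm (inr (t, i))).
pose block (u : T_vert k l) : item :=
  match u with inl b => inl b | inr (t, (i, _)) => inr (t, i) end.
pose phi (u : T_vert k l) : V :=
  match u with
  | inl b => (a (inl b)).1
  | inr (t, (i, j)) => star_at k h E (a (inl (leaf t))).1 (Some ((a (inr (t, i))).2, j))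
  end.
have phi_img u : phi u \in img (block u) (a (block u)).
  by case: u => [b|[t [i j]]] /=; [rewrite inE | rewrite at_leaf; apply: imset_f].
exists phi; split.
  move=> u v; have [same|diff] := eqVneq (block u) (block v); last first.
    by move=> uv; have := disjointFr (dis _ _ diff) (phi_img u); rewrite uv phi_img.
  case: u v same => [b|[t [i j]]] [b'|[t' [i' j']]] //= [] => [-> //|<- <- uv].
  by have [c_inj _ _] := star_atP (centre t); case: (c_inj _ _ uv) => ->.
move=> [b|[t [i j]]] [b'|[t' [i' j']]] //= uv.
- by have /andP [_ /forallP /(_ b) /implyP] := adm (inl b'); apply.
- have [_ c_edge c_None] := star_atP (centre t).
  case/andP: uv => j0 /eqP b't; have -> : b' = leaf t by apply: B_word_inj.
  by rewrite -[X in E _ X]c_None; apply: c_edge.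
- have [_ c_edge _] := star_atP (centre t).
  by case/andP: uv => /andP [/eqP <- /eqP <-] jj'; apply: c_edge; rewrite /= eqxx.
Qed.

Lemma tree_embedding : contains E (@T_edge k l).
Proof.
have [a [adm dis]] := greedy_choice (r, p0) admissible_lower card_img item_candidates.
exact: contains_T_of_choice adm dis.
Qed.

End TreeEmbedding.

Theorem theorem3p3 (f : nat -> nat -> int) :
  (forall k h : nat, 1 <= k -> 1 <= h ->
     forall (V : finType) (E : rel V), digraph E -> mindeg_ge E (f k h) ->
       contains E (@Sm_edge k h)) ->
  forall k l : nat, 1 <= k -> 2 <= l ->
    forall (V : finType) (E : rel V), digraph E ->
      mindeg_ge E (f k (3 * k * l ^ k.+1)%N + (2 * k * l ^ k)%N%:Z)%R ->
      contains E (@T_edge k l).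
Proof.
move=> forcing k l k_gt0 l_ge2 V E E_digraph deg_ge.
set h := (3 * k * l ^ k.+1)%N in deg_ge.
have card_B := card_B_vert_lt k l_ge2.
have lk_le : l ^ k <= k * (l * l ^ k).
  by rewrite -[leqLHS]mul1n leq_mul // leq_pmull // (leq_trans _ l_ge2).
have size_T_lt_h : #|{: B_vert k l}| + k * (l ^ k * l) < h.
  by move: card_B lk_le; rewrite /h expnS; lia.
have h_gt0 : 0 < h by apply: leq_ltn_trans size_T_lt_h.
have [m fm] : exists m, (f k h = m%:Z)%R.
  have f_gt0 := threshold_gt0 k_gt0 h_gt0 (forcing k h k_gt0 h_gt0).
  by exists `|f k h|%N; rewrite gez0_abs // Order.POrderTheory.ltW.
have forcing_m (W : finType) (F : rel W) :
    digraph F -> mindeg_ge F m%:Z -> contains F (@Sm_edge k h).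
  by rewrite -fm; apply: forcing.
have outdeg_ge x : m + k * (2 * l ^ k) <= outdeg E x.
  by have := deg_ge x; rewrite fm -PoszD lez_nat; lia.
have d_gt0 : 0 < 2 * l ^ k by rewrite muln_gt0 expn_gt0 (leq_trans _ l_ge2).
have [r r_top] := level_top_nonempty k_gt0 d_gt0 E_digraph outdeg_ge forcing_m.
exact: tree_embedding r_top card_B size_T_lt_h.
Qed.
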